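(* Let $n\ge 1$. The maximum success probability of any strategy for the New Hats-on-a-line Game with two hat colours and $n$ players is $1-2^{-n}$.
   Context: The New Hats-on-a-line Game with $q$ colours and $n$ players: players $P_1,\dots,P_n$ stand in a line, and each player $P_i$ receives a hat whose colour $c_i$ is chosen uniformly at random from a fixed set of $q$ colours, independently of the other hats. Player $P_i$ sees exactly the hat colours $c_{i+1},\dots,c_n$. The players respond sequentially in the order $P_1,\dots,P_n$; each response is either a colour (a guess of one's own hat colour) or ''pass'', and each player hears all previous responses. No other communication is allowed, apart from agreeing on a strategy beforehand. A strategy specifies, for each player $P_i$, his response as a function of the colours he sees and the responses he has heard. The players win if at least one player guesses correctly and no player guesses incorrectly; the success probability of a strategy is the probability that the players win. Here $q=2$. *)

From mathcomp Require Import all_boot all_order all_algebra.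
Set Implicit Arguments. Unset Strict Implicit. Unset Printing Implicit Defensive.
Import Order.TTheory GRing.Theory Num.Theory.

(* Players are indexed 0, ..., n-1 (player P_{i+1} of the paper is index i).
   A response is an option bool: None = "pass", Some b = guess colour b. *)
Definition hats (n : nat) := {ffun 'I_n -> bool}.
Definition response := option bool.

(* A (deterministic) strategy: player i's response as a function of the
   hat assignment and the list of responses heard so far (those of players
   0..i-1, in order). *)
Definition strategy (n : nat) := nat -> hats n -> seq response -> response.

Definition legal n (s : strategy n) : Prop :=
  forall (i : nat) (c c' : hats n) (h : seq response),
    (forall j : 'I_n, i < j -> c j = c' j) -> s i c h = s i c' h.

Fixpoint play n (s : strategy n) (c : hats n) (k : nat) : seq response :=
  match k with
  | 0 => [::]
  | k'.+1 => let h := play s c k' in rcons h (s k' c h)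
  end.

Definition responses n (s : strategy n) (c : hats n) : seq response :=
  play s c n.

Definition wins n (s : strategy n) (c : hats n) : bool :=
  let r := responses s c in
  [exists j : 'I_n, nth None r j == Some (c j)] &&
  [forall j : 'I_n, (nth None r j == None) || (nth None r j == Some (c j))].

Definition success_prob n (s : strategy n) : rat :=
  (#|[set c : hats n | wins s c]|%:R / (2 ^ n)%:R)%R.

From mathcomp Require Import all_boot all_order all_algebra.
Import Order.TTheory GRing.Theory Num.Theory.

Set Implicit Arguments.
Unset Strict Implicit.
Unset Printing Implicit Defensive.

(* Upper bound: a legal strategy cannot depend on a player's own hat, so,
   going from the last player to the first, each hat can be chosen so that
   its owner, hearing only passes, does not guess it.  For this assignment
   the players pass until the first one who speaks, and he is wrong.
   Lower bound: a player guesses "true" iff everybody before him passed and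
   every hat he sees is "false"; then exactly the last "true" hat is guessed,
   and the players lose only when all hats are "false". *)

Lemma rcons_nseq (T : Type) (x : T) k : rcons (nseq k x) x = nseq k.+1 x.
Proof. by elim: k => //= k ->. Qed.

Section Play.
Variable n : nat.
Implicit Types (s : strategy n) (c : hats n).

Lemma size_play s c k : size (play s c k) = k.
Proof. by elim: k => //= k IHk; rewrite size_rcons IHk. Qed.

Lemma nth_play s c k j : (j < k)%N -> nth None (play s c k) j = s j c (play s c j).
Proof.
elim: k => // k IHk; rewrite ltnS leq_eqVlt => /orP[/eqP->|ltjk] /=.
  by rewrite nth_rcons size_play ltnn eqxx.
by rewrite nth_rcons size_play ltjk IHk.
Qed.

Definition fooled s c :=
  forall j : 'I_n, s j c (nseq j None) != Some (c j).

Lemma fooled_play_cases s c : fooled s c -> forall k, (k <= n)%N ->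
  play s c k = nseq k None \/ exists j : 'I_n, s j c (play s c j) = Some (~~ c j).
Proof.
move=> fooled_c; elim=> [|k IHk] ltkn; first by left.
have [silent|] := IHk (ltnW ltkn); last by right.
have guess_k := fooled_c (Ordinal ltkn); rewrite /= -silent in guess_k.
rewrite /=; case r_k: (s k c (play s c k)) guess_k => [g|] guess_k.
  right; exists (Ordinal ltkn); by rewrite r_k; case: (c _) guess_k; case: (g).
by left; rewrite silent rcons_nseq.
Qed.

Lemma fooled_loses s c : fooled s c -> ~~ wins s c.
Proof.
move=> /fooled_play_cases/(_ n (leqnn n)) [silent|[j wrong_j]];
  rewrite /wins /responses negb_and; apply/orP.
  by left; rewrite negb_exists; apply/forallP => j; rewrite silent nth_nseq ltn_ord.
right; rewrite negb_forall; apply/existsP; exists j.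
by rewrite nth_play // wrong_j; case: (c j).
Qed.

Lemma legal_fooled_from s : legal s -> forall k, exists c,
  forall j : 'I_n, (k <= j)%N -> s j c (nseq j None) != Some (c j).
Proof.
(* Downward induction on k, i.e. induction on n - k. *)
move=> legal_s k; move: {2}(n - k) (erefl (n - k)) => m; elim: m k => [|m IHm] k nk.
  by exists [ffun=> false] => j; rewrite leqNgt (leq_trans (ltn_ord j)) // -subn_eq0 nk.
have ltkn : (k < n)%N by rewrite -subn_gt0 nk.
have [|c1 fooled_c1] := IHm k.+1; first by rewrite subnS nk.
pose kk := Ordinal ltkn.
pose c := [ffun j => if j == kk then
                       if s k c1 (nseq k None) is Some g then ~~ g else c1 kk
                     else c1 j].
have same_from_k j : (k <= j)%N -> s j c (nseq j None) = s j c1 (nseq j None).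
  move=> lekj; apply: legal_s => i ltji; rewrite ffunE.
  have ltki := leq_ltn_trans lekj ltji.
  by case: eqP ltki => [->|//]; rewrite ltnn.
exists c => j; rewrite leq_eqVlt => /orP[/eqP kj|ltkj].
  have -> : j = kk by apply: val_inj; rewrite /= kj.
  rewrite same_from_k //= ffunE eqxx.
  by case: (s k c1 (nseq k None)) => [[]|].
rewrite (same_from_k _ (ltnW ltkj)) ffunE.
by case: (j =P kk) ltkj => [->|_]; [rewrite ltnn | apply: fooled_c1].
Qed.

Lemma legal_fooled s : legal s -> exists c, fooled s c.
Proof. by move=> /legal_fooled_from/(_ 0%N) [c fooled_c]; exists c => j; apply: fooled_c. Qed.

Definition last_true_strategy : strategy n := fun i c h =>
  if all (pred1 None) h && [forall j : 'I_n, (i < j)%N ==> ~~ c j]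
  then Some true else None.

Lemma last_true_strategy_legal : legal last_true_strategy.
Proof.
move=> i c c' h same_c; rewrite /last_true_strategy.
congr (if _ && _ then _ else _); apply: eq_forallb => j.
by case: ltnP => ltij //=; rewrite same_c.
Qed.

Lemma last_true_wins c (k : 'I_n) :
  c k -> (forall j : 'I_n, c j -> (j <= k)%N) -> wins last_true_strategy c.
Proof.
move=> ck k_last; set strat := last_true_strategy.
have later_true j : (j < k)%N -> [forall i : 'I_n, (j < i)%N ==> ~~ c i] = false.
  by move=> ltjk; apply/negbTE; rewrite negb_forall; apply/existsP; exists k; rewrite ltjk ck.
have silent_upto j : (j <= k)%N -> play strat c j = nseq j None.
  elim: j => // j IHj ltjk /=; rewrite IHj ?(ltnW ltjk) //.
  by rewrite /strat /last_true_strategy later_true // andbF rcons_nseq.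
have guess_k : strat k c (play strat c k) = Some true.
  rewrite silent_upto // /strat /last_true_strategy all_nseq /= orbT /=.
  suff -> : [forall i : 'I_n, (k < i)%N ==> ~~ c i] by [].
  apply/forallP => i; apply/implyP => ltki; apply: contraTN ltki => ci.
  by rewrite -leqNgt k_last.
have pass_after j : (k < j)%N -> strat j c (play strat c j) = None.
  move=> ltkj; rewrite /strat /last_true_strategy.
  suff /negbTE-> : ~~ all (pred1 None) (play strat c j) by [].
  apply/allPn; exists (Some true) => //.
  by rewrite -guess_k -(nth_play _ _ ltkj) mem_nth // size_play.
apply/andP; split.
  by apply/existsP; exists k; rewrite nth_play // guess_k ck.
apply/forallP => j; rewrite nth_play //; case: (ltngtP k j) => [ltkj|ltjk|kj].
- by rewrite pass_after.
- by rewrite silent_upto ?(ltnW ltjk) // /strat /last_true_strategy later_true // andbF.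
- by rewrite (_ : j = k) ?guess_k ?ck //; apply: val_inj.
Qed.

Lemma wins_last_true c : wins last_true_strategy c = (c != [ffun=> false]).
Proof.
have [->|] := eqVneq c [ffun=> false].
  apply/negbTE; rewrite negb_and negb_exists; apply/orP; left; apply/forallP => j.
  rewrite nth_play // ffunE /last_true_strategy.
  by case: ifP.
move=> not_all_false; apply/idP.
have [j cj] : exists j, c j.
  apply/existsP; move: not_all_false; apply: contraNT; rewrite negb_exists => /forallP no_true.
  by apply/eqP/ffunP => j; rewrite ffunE; apply/negbTE/no_true.
have [k ck k_last] := arg_maxnP (fun i : 'I_n => val i) cj.
exact: last_true_wins ck k_last.
Qed.

End Play.

Local Open Scope ring_scope.

Lemma success_prob_losers n (s : strategy n) :
  success_prob s = 1 - #|[set c | ~~ wins s c]|%:R / (2 ^ n)%:R.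
Proof.
have pow_neq0 : (2 ^ n)%:R != 0 :> rat by rewrite pnatr_eq0 expn_eq0.
have card_split : #|[set c | wins s c]| + #|[set c | ~~ wins s c]| = (2 ^ n)%N.
  have card_hats : #|hats n| = (2 ^ n)%N by rewrite card_ffun card_bool card_ord.
  rewrite -card_hats -(cardsC [set c | wins s c]); congr (_ + _)%N.
  by apply: eq_card => c; rewrite !inE.
apply: (mulIf pow_neq0); rewrite mulrBl mul1r !divfK // -card_split natrD.
by rewrite addrK.
Qed.

Theorem theorem2 (n : nat) (hn : (1 <= n)%N) :
  (exists s : strategy n, legal s /\ success_prob s = 1 - 1 / (2 ^ n)%:R) /\
  (forall s : strategy n, legal s -> success_prob s <= 1 - 1 / (2 ^ n)%:R).
Proof.
split.
  exists (@last_true_strategy n); split; first exact: last_true_strategy_legal.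
  rewrite success_prob_losers (_ : [set c | ~~ wins _ c] = [set [ffun=> false]]) ?cards1 //.
  by apply/setP => c; rewrite !inE wins_last_true negbK.
move=> s legal_s; rewrite !success_prob_losers lerD2l lerN2.
rewrite ler_pM2r ?invr_gt0 ?ltr0n ?expn_gt0 // ler1n card_gt0.
have [c fooled_c] := legal_fooled legal_s.
by apply/set0Pn; exists c; rewrite inE fooled_loses.
Qed.
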